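(* Let $k:\mathbb{N}\to\mathbb{N}$ satisfy $k(n)\to\infty$ as $n\to\infty$ and $k(n)=o(\sqrt{n})$. Then $$g(n,K_3,S_{k(n)+1})\ge (1+o(1))\frac{n\,k(n)^2}{48}.$$
   Context: Constructor-Blocker game: given graphs $H$ and $F$, two players, Constructor and Blocker, alternately claim previously unclaimed edges of the complete graph $K_n$, Constructor moving first. Constructor may only claim an edge if her graph (the edges she has claimed) remains $F$-free (contains no subgraph isomorphic to $F$); Blocker may claim any unclaimed edge. The game ends when Constructor cannot claim any more edges or all edges are claimed. The score is the number of copies of $H$ in Constructor's graph at the end. Constructor maximizes, Blocker minimizes; $g(n,H,F)$ denotes the score under optimal play by both. $S_k$ denotes the star with $k$ leaves (so being $S_{k+1}$-free means maximum degree at most $k$). *)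

From mathcomp Require Import all_boot.
Set Implicit Arguments. Unset Strict Implicit. Unset Printing Implicit Defensive.

(* Vertices of K_n are 'I_n; an edge is a 2-element vertex set. *)
Definition Kedges (n : nat) : {set {set 'I_n}} :=
  [set e : {set 'I_n} | #|e| == 2].

(* A graph on [n] is given by its edge set G \subset Kedges n. *)
Definition deg n (G : {set {set 'I_n}}) (v : 'I_n) : nat :=
  #|[set e in G | v \in e]|.

Definition has_star n (k : nat) (G : {set {set 'I_n}}) : bool :=
  [exists v : 'I_n, [exists L : {set 'I_n},
     [&& #|L| == k.+1, v \notin L & [forall u in L, [set v; u] \in G]]]].

Definition star_free n k (G : {set {set 'I_n}}) : bool := ~~ has_star k G.

Definition ntri n (G : {set {set 'I_n}}) : nat :=
  #|[set T : {set 'I_n} | (#|T| == 3) &&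
     [forall e : {set 'I_n}, ((e \subset T) && (#|e| == 2)) ==> (e \in G)]]|.

(* Value of the Constructor-Blocker game from the position where Constructor
   owns C, Blocker owns B, [constr] says whether Constructor is to move, and
   [fuel] bounds the number of remaining moves (we start with fuel equal to the
   number of edges of K_n, which always equals the number of unclaimed edges). *)
Fixpoint gval n (k : nat) (fuel : nat) (constr : bool)
    (C B : {set {set 'I_n}}) : nat :=
  match fuel with
  | 0 => ntri C
  | fuel'.+1 =>
    let U := [set e in Kedges n | (e \notin C) && (e \notin B)] in
    if constr then
      let L := [set e in U | star_free k (e |: C)] in
      if L == set0 then ntri C
      else \max_(e in L) gval k fuel' false (e |: C) B
    else
      if U == set0 then ntri C
      else \big[minn/#|[set: {set 'I_n}]|]_(e in U) gval k fuel' true C (e |: B)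
  end.

Definition g_K3_star (n k : nat) : nat :=
  @gval n k #|Kedges n| true set0 set0.

From Stdlib Require Import Reals Lra Psatz.
From mathcomp Require Import all_boot zify.
Set Implicit Arguments. Unset Strict Implicit. Unset Printing Implicit Defensive.

(* Constructor confines herself to a host graph P all of whose subgraphs are
   S_{k+1}-free -- the disjoint union of cliques K_{k+1} on consecutive blocks
   of vertices -- so the degree constraint never binds.  Inside P she plays an
   Erdos-Selfridge potential strategy: a triangle of P not yet hit by Blocker
   weighs 2^(number of its edges she owns), and she claims the unclaimed edge
   of P of largest total weight.  Her move raises the potential by that
   weight; Blocker's reply f lowers it by the weight of f, which exceeds hers
   by at most 2 since only the triangle e \cup f contains both edges.  So the
   potential minus twice the number of unclaimed edges of P never decreases:
   it starts at #triangles(P) - 2|P| and ends at most 8 times the number of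
   triangles she built.  With n/(k+1) blocks this gives
   48 g >= n k^2 - O(n k + k^3), and k -> oo, k = o(sqrt n) make the error
   terms negligible. *)

Section Graphs.
Variable n : nat.
Implicit Types (A B C G : {set {set 'I_n}}) (T e f : {set 'I_n}).

Definition triangles G : {set {set 'I_n}} :=
  [set T : {set 'I_n} | (#|T| == 3) &&
     [forall e : {set 'I_n}, ((e \subset T) && (#|e| == 2)) ==> (e \in G)]].

Lemma ntriE G : ntri G = #|triangles G|.
Proof. by []. Qed.

Lemma card_triangle G T : T \in triangles G -> #|T| = 3.
Proof. by rewrite inE => /andP[/eqP]. Qed.

Lemma triangle_edge G T e : T \in triangles G -> e \subset T -> #|e| = 2 -> e \in G.
Proof.
by rewrite inE => /andP[_ /forallP/(_ e)] /implyP H eT ce; apply: H; rewrite eT ce.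
Qed.

Lemma ntriS C C' : C \subset C' -> ntri C <= ntri C'.
Proof.
move=> sC; apply/subset_leq_card/subsetP => T; rewrite !inE => /andP[-> /forallP H].
by apply/forallP => e; apply/implyP => He; apply: (subsetP sC); apply: (implyP (H e)).
Qed.

Lemma star_freeS k G G' : G \subset G' -> star_free k G' -> star_free k G.
Proof.
move=> sG; apply: contra => /existsP[v /existsP[L /and3P[cL vL /forall_inP HL]]].
apply/existsP; exists v; apply/existsP; exists L; rewrite cL vL /=.
by apply/forall_inP => u /HL /(subsetP sG).
Qed.

Definition unclaimed A C B := [set e in A | (e \notin C) && (e \notin B)].

Lemma unclaimed0 A : unclaimed A set0 set0 = A.
Proof. by apply/setP => x; rewrite !inE andbT. Qed.

Lemma unclaimedU1C A C B e : unclaimed A (e |: C) B = unclaimed A C B :\ e.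
Proof. by apply/setP => x; rewrite !inE; case: (x == e); rewrite ?andbF ?andbT. Qed.

Lemma unclaimedU1B A C B e : unclaimed A C (e |: B) = unclaimed A C B :\ e.
Proof. by apply/setP => x; rewrite !inE; case: (x == e); rewrite ?andbF ?andbT. Qed.

Lemma unclaimedS A A' C B : A \subset A' -> unclaimed A C B \subset unclaimed A' C B.
Proof. by move=> sA; apply/subsetP => x; rewrite !inE => /andP[/(subsetP sA) -> ->]. Qed.

Lemma gval_true k fuel C B :
  let L := [set e in unclaimed (Kedges n) C B | star_free k (e |: C)] in
  gval k fuel.+1 true C B =
    if L == set0 then ntri C else \max_(e in L) gval k fuel false (e |: C) B.
Proof. by []. Qed.

Lemma gval_false k fuel C B :
  gval k fuel.+1 false C B =
    if unclaimed (Kedges n) C B == set0 then ntri C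
    else \big[minn/#|[set: {set 'I_n}]|]_(e in unclaimed (Kedges n) C B)
           gval k fuel true C (e |: B).
Proof. by []. Qed.

Lemma gval_false_stuck k fuel C B :
  unclaimed (Kedges n) C B = set0 -> gval k fuel false C B = ntri C.
Proof. by case: fuel => [|fuel] // U0; rewrite gval_false U0 eqxx. Qed.

Lemma gval_ge_ntri k fuel b C B : ntri C <= gval k fuel b C B.
Proof.
elim: fuel b C B => [|fuel IH] [] C B //.
  rewrite gval_true /=; case: ifP => // /set0Pn[e eL].
  apply: leq_trans (ntriS (subsetUr [set e] C)) _.
  exact: leq_trans (IH false _ _) (leq_bigmax_cond _ eL).
rewrite gval_false; case: ifP => // _.
apply: (big_ind (leq (ntri C))); first by rewrite cardsT max_card.
  by move=> x y; rewrite leq_min => -> ->.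
by move=> e _; apply: IH.
Qed.

Definition edges_in C T := #|[set e in C | e \subset T]|.

Definition alive B T := [forall e in B, ~~ (e \subset T)].

Lemma alive_setU1 B f T : alive (f |: B) T = alive B T && ~~ (f \subset T).
Proof.
apply/forall_inP/andP => [H | [/forall_inP H fT] x].
  split; last by apply: H; rewrite setU11.
  by apply/forall_inP => x xB; apply: H; rewrite inE xB orbT.
by case/setU1P => [-> // | /H].
Qed.

Lemma edges_in0 T : edges_in set0 T = 0.
Proof. by apply: eq_card0 => x; rewrite !inE. Qed.

Lemma alive0 T : alive set0 T.
Proof. by apply/forall_inP => x; rewrite inE. Qed.

Lemma edges_inU1 C e T :
  e \notin C -> edges_in (e |: C) T = edges_in C T + (e \subset T).
Proof.
move=> eC; rewrite /edges_in; have [eT | eT] := boolP (e \subset T).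
  rewrite (_ : [set x in e |: C | x \subset T] = e |: [set x in C | x \subset T]).
    by rewrite cardsU1 inE (negbTE eC) addnC.
  by apply/setP => x; rewrite !inE; case: eqP => // ->.
rewrite addn0; apply: eq_card => x; rewrite !inE.
by case: eqP => // ->; rewrite (negbTE eT) (negbTE eC).
Qed.

Lemma edges_in_sub C T : C \subset Kedges n ->
  [set x in C | x \subset T] \subset [set x : {set 'I_n} | x \subset T & #|x| == 2].
Proof.
move=> CK; apply/subsetP => x; rewrite !inE => /andP[xC ->].
by have := subsetP CK x xC; rewrite inE.
Qed.

Lemma edges_in_le3 C T : C \subset Kedges n -> #|T| = 3 -> edges_in C T <= 3.
Proof.
move=> CK cT; rewrite -[3]/'C(3, 2) -cT -cards_draws.
exact/subset_leq_card/edges_in_sub.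
Qed.

Lemma edges_in_le1 C T e f : C \subset Kedges n -> #|T| = 3 ->
  e \subset T -> f \subset T -> #|e| = 2 -> #|f| = 2 -> e != f ->
  e \notin C -> f \notin C -> edges_in C T <= 1.
Proof.
move=> CK cT eT fT ce cf ef eC fC.
set D := [set x : {set 'I_n} | x \subset T & #|x| == 2].
have efD : [set e; f] \subset D.
  by apply/subsetP => x; rewrite !inE => /orP[] /eqP ->; rewrite ?eT ?fT ?ce ?cf.
have : [set x in C | x \subset T] \subset D :\: [set e; f].
  apply/subsetP => x xCT; rewrite inE (subsetP (edges_in_sub T CK) x xCT) andbT.
  move: xCT; rewrite !inE => /andP[xC _].
  by apply/negP => /orP[] /eqP xE; [apply: (negP eC) | apply: (negP fC)]; rewrite -xE.
by move/subset_leq_card; rewrite cardsD (setIidPr efD) cards_draws cT cards2 ef.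
Qed.

Lemma triangle_setU T e f : #|T| = 3 -> e \subset T -> f \subset T ->
  #|e| = 2 -> #|f| = 2 -> e != f -> T = e :|: f.
Proof.
move=> cT eT fT ce cf ef; apply/eqP; rewrite eq_sym eqEcard subUset eT fT cT /=.
have : #|e :&: f| < 2.
  rewrite ltnNge; apply: contra ef => big.
  have Ie : e :&: f = e by apply/eqP; rewrite eqEcard subsetIl ce.
  have If : e :&: f = f by apply/eqP; rewrite eqEcard subsetIr cf.
  by rewrite -{1}Ie If.
rewrite cardsU ce cf; lia.
Qed.

End Graphs.

Section PotentialStrategy.
Variables (n k : nat) (P : {set {set 'I_n}}).
Hypotheses (P_Kedges : P \subset Kedges n) (P_star_free : star_free k P).
Implicit Types (B C S : {set {set 'I_n}}) (T e f : {set 'I_n}).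

Definition potential C B :=
  \sum_(T in triangles P | alive B T) 2 ^ edges_in C T.

Definition weight C B f :=
  \sum_(T in triangles P | alive B T && (f \subset T)) 2 ^ edges_in C T.

Lemma potentialU1C C B e :
  e \notin C -> potential (e |: C) B = potential C B + weight C B e.
Proof.
move=> eC; rewrite /weight (eq_bigl _ _ (fun T => andbA _ _ _)) big_mkcondr.
rewrite /potential -big_split; apply: eq_bigr => T _ /=.
by rewrite edges_inU1 //; case: (e \subset T); rewrite ?addn0 ?addn1 ?expnS ?mul2n -?addnn.
Qed.

Lemma potentialU1B C B f : potential C (f |: B) + weight C B f = potential C B.
Proof.
rewrite /potential /weight [RHS](bigID (fun T => f \subset T)) /= addnC.
by congr (_ + _); apply: eq_bigl => T; rewrite ?alive_setU1 andbA.
Qed.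

Lemma weight_out C B f : #|f| = 2 -> f \notin P -> weight C B f = 0.
Proof.
move=> cf fP; apply: big_pred0 => T; apply/negP => /and3P[TP _ fT].
by rewrite (triangle_edge TP fT cf) in fP.
Qed.

Lemma weightU1C_le C B e f : C \subset P -> #|e| = 2 -> #|f| = 2 -> e != f ->
  e \notin C -> f \notin C -> weight (e |: C) B f <= weight C B f + 2.
Proof.
move=> CP ce cf ef eC fC; have CK := subset_trans CP P_Kedges.
apply: leq_trans (_ : _ <= weight C B f + \sum_(T | T == e :|: f) 2) _.
  rewrite /weight big_mkcond [X in X + _]big_mkcond [X in _ + X]big_mkcond -big_split /=.
  apply: leq_sum => T _.
  case: ifP => [/andP[TP /andP[_ fT]] | _] //.
  rewrite edges_inU1 //; have [eT | eT] := boolP (e \subset T).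
    rewrite -(triangle_setU (card_triangle TP) eT fT ce cf ef) eqxx addn1 expnS.
    rewrite mul2n -addnn leq_add2l.
    have := edges_in_le1 CK (card_triangle TP) eT fT ce cf ef eC fC.
    by case: (edges_in C T) => [|[]].
  by rewrite addn0 leq_addr.
by rewrite big_pred1_eq.
Qed.

Lemma potential_le_card C B S : C \subset Kedges n ->
  {in triangles P, forall T, alive B T -> T \in S} -> potential C B <= 8 * #|S|.
Proof.
move=> CK HS; rewrite mulnC -sum_nat_const /potential big_mkcond [X in _ <= X]big_mkcond.
apply: leq_sum => T _; case: ifP => // /andP[TP aT]; rewrite (HS T TP aT).
by rewrite (@leq_pexp2l 2 _ 3) // edges_in_le3 // (card_triangle TP).
Qed.

Lemma potential_stuck C B : C \subset P -> unclaimed P C B = set0 ->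
  potential C B <= 8 * ntri C.
Proof.
move=> CP U0; apply: (@potential_le_card C B (triangles C)).
  exact: subset_trans CP P_Kedges.
move=> T TP /forall_inP aT; rewrite inE (card_triangle TP) eqxx /=.
apply/forallP => e; apply/implyP => /andP[eT /eqP ce]; apply: contraT => eC.
have eB : e \notin B by apply: contraL eT; apply: aT.
by have := in_set0 e; rewrite -U0 inE (triangle_edge TP eT ce) eC eB.
Qed.

Lemma host_edge_legal C B e : C \subset P -> e \in unclaimed P C B ->
  e \in [set x in unclaimed (Kedges n) C B | star_free k (x |: C)].
Proof.
move=> CP eU; rewrite inE (subsetP (unclaimedS C B P_Kedges) e eU) /=.
apply: star_freeS P_star_free; rewrite subUset sub1set CP andbT.
by move: eU; rewrite inE => /andP[].
Qed.

Lemma potential_round C B e f : C \subset P -> e \in unclaimed P C B ->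
  {in unclaimed P C B, forall x, weight C B x <= weight C B e} ->
  f \in unclaimed (Kedges n) (e |: C) B ->
  potential C B + 2 * #|unclaimed P (e |: C) (f |: B)|
    <= potential (e |: C) (f |: B) + 2 * #|unclaimed P C B|.
Proof.
move=> CP eU e_max fU.
move: (eU) (fU); rewrite !inE => /and3P[eP eC eB] /and3P[/eqP cf /norP[fe fC] fB].
have ce : #|e| = 2 by move: (subsetP P_Kedges e eP); rewrite inE => /eqP.
have ef : e != f by rewrite eq_sym.
have gain := potentialU1C B eC.
have loss := potentialU1B (e |: C) B f.
have cardC : #|unclaimed P C B| = #|unclaimed P (e |: C) B|.+1.
  by rewrite (cardsD1 e) eU unclaimedU1C.
rewrite unclaimedU1B; case fP: (f \in P).
  have fU' : f \in unclaimed P C B by rewrite inE fP fC fB.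
  have cardB : #|unclaimed P (e |: C) B| = #|unclaimed P (e |: C) B :\ f|.+1.
    by rewrite (cardsD1 f) !inE fP (negbTE fe) (negbTE fC) fB.
  have := e_max f fU'; have := weightU1C_le B CP ce cf ef eC fC.
  clear -gain loss cardC cardB; lia.
have cardB : #|unclaimed P (e |: C) B :\ f| = #|unclaimed P (e |: C) B|.
  by rewrite [RHS](cardsD1 f) inE fP.
rewrite weight_out ?fP // in loss; clear -gain loss cardC cardB; lia.
Qed.

Lemma blocker_turn fuel C B e : C \subset P -> e \in unclaimed P C B ->
  {in unclaimed P C B, forall x, weight C B x <= weight C B e} ->
  #|unclaimed (Kedges n) (e |: C) B| <= fuel ->
  (forall f, f \in unclaimed (Kedges n) (e |: C) B ->
     potential (e |: C) (f |: B) <= 8 * gval k fuel.-1 true (e |: C) (f |: B)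
                                     + 2 * #|unclaimed P (e |: C) (f |: B)|) ->
  potential C B <= 8 * gval k fuel false (e |: C) B + 2 * #|unclaimed P C B|.
Proof.
move=> CP eU e_max Cfuel reply.
have [stuck | [f0 f0U]] := set_0Vmem (unclaimed (Kedges n) (e |: C) B).
  move: (eU); rewrite gval_false_stuck // !inE => /and3P[eP eC _].
  have CeP : e |: C \subset P by rewrite subUset sub1set eP CP.
  have stuckP : unclaimed P (e |: C) B = set0.
    by apply/eqP; rewrite -subset0 -stuck unclaimedS.
  apply: leq_trans (leq_addr _ _); apply: leq_trans (potential_stuck CeP stuckP).
  by rewrite potentialU1C // leq_addr.
case: fuel Cfuel reply => [|fuel] Cfuel reply.
  by move: Cfuel; rewrite (cardsD1 f0) f0U.
rewrite gval_false ifN; last by apply/set0Pn; exists f0.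
apply: (big_ind (fun x => potential C B <= 8 * x + 2 * #|unclaimed P C B|)).
- apply: leq_trans (leq_addr _ _).
  by apply: potential_le_card (subset_trans CP P_Kedges) _ => T _ _; rewrite inE.
- by move=> x y Hx Hy; rewrite /minn; case: ifP.
move=> f fU; rewrite -(leq_add2r (2 * #|unclaimed P (e |: C) (f |: B)|)).
apply: leq_trans (potential_round CP eU e_max fU) _.
by rewrite addnAC leq_add2r reply.
Qed.

(* [gval] returns [ntri C] once its fuel runs out, hence the fuel bound. *)
Lemma potential_invariant fuel C B : C \subset P ->
  #|unclaimed (Kedges n) C B| <= fuel ->
  potential C B <= 8 * gval k fuel true C B + 2 * #|unclaimed P C B|.
Proof.
elim/ltn_ind: fuel C B => fuel IH C B CP Cfuel.
have [stuck | [e0 e0U]] := set_0Vmem (unclaimed P C B).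
  apply: leq_trans (potential_stuck CP stuck) (leq_trans _ (leq_addr _ _)).
  by rewrite leq_mul2l gval_ge_ntri orbT.
have [e eU e_max] := @arg_maxnP _ e0 (mem (unclaimed P C B)) (weight C B) e0U.
have eK := subsetP (unclaimedS C B P_Kedges) e eU.
have eP : e \in P by case/setIdP: eU.
have cardK : #|unclaimed (Kedges n) C B| = #|unclaimed (Kedges n) (e |: C) B|.+1.
  by rewrite (cardsD1 e) eK unclaimedU1C.
case: fuel IH Cfuel => [|fuel] IH Cfuel; first by rewrite cardK in Cfuel.
rewrite gval_true /= ifN; last by apply/set0Pn; exists e; apply: host_edge_legal.
apply: leq_trans (_ : _ <= 8 * gval k fuel false (e |: C) B + 2 * #|unclaimed P C B|) _.
  2: by rewrite leq_add2r leq_mul2l (leq_bigmax_cond _ (host_edge_legal CP eU)) orbT.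
apply: (blocker_turn CP eU e_max) => [|f fU]; first by rewrite -ltnS -cardK.
have cardKf : #|unclaimed (Kedges n) (e |: C) B| =
              #|unclaimed (Kedges n) (e |: C) (f |: B)|.+1.
  by rewrite (cardsD1 f) fU unclaimedU1B.
apply: IH; first by rewrite ltnS leq_pred.
  by rewrite subUset sub1set eP CP.
by move: Cfuel; rewrite cardK cardKf; case: fuel.
Qed.

Lemma potential0 : potential set0 set0 = ntri P.
Proof.
rewrite /potential ntriE -sum1_card.
by apply: eq_big => [T | T _]; rewrite ?alive0 ?andbT ?edges_in0.
Qed.

Lemma ntri_le_g_K3_star : ntri P <= 8 * g_K3_star n k + 2 * #|P|.
Proof.
have := @potential_invariant #|Kedges n| set0 set0 (sub0set _).
by rewrite !unclaimed0 potential0 => /(_ (leqnn _)).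
Qed.

End PotentialStrategy.

Lemma leq_card_bigcup (T I : finType) (F : I -> {set T}) :
  #|\bigcup_i F i| <= \sum_i #|F i|.
Proof.
elim/big_rec2: _ => [|i A s _ IH]; first by rewrite cards0.
by apply: leq_trans (leq_card_setU _ _).1 _; rewrite leq_add2l.
Qed.

Section Blocks.
Variables n k : nat.

Definition block (q : nat) : {set 'I_n} := [set u : 'I_n | u %/ k.+1 == q].

Definition block_edges : {set {set 'I_n}} :=
  [set e in Kedges n | [forall u in e, forall v in e, u %/ k.+1 == v %/ k.+1]].

Lemma block_edges_Kedges : block_edges \subset Kedges n.
Proof. by apply/subsetP => e; rewrite inE => /andP[]. Qed.

Lemma block_edge_mem e u v :
  e \in block_edges -> u \in e -> v \in e -> v \in block (u %/ k.+1).
Proof.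
rewrite !inE => /andP[_ /forall_inP He] ue ve.
by move/forall_inP: (He v ve) => /(_ u ue).
Qed.

Definition block_offset (u : 'I_n) : 'I_k.+1 := Ordinal (ltn_pmod u (ltn0Sn k)).

Lemma block_offset_inj q : {in block q &, injective block_offset}.
Proof.
move=> u v; rewrite !inE => /eqP Hu /eqP Hv /(congr1 val) /= Huv.
by apply: val_inj; rewrite /= (divn_eq u k.+1) (divn_eq v k.+1) Hu Hv Huv.
Qed.

Lemma card_block q : #|block q| <= k.+1.
Proof.
rewrite -(card_in_imset (@block_offset_inj q)).
by apply: leq_trans (max_card _) _; rewrite card_ord.
Qed.

Lemma card_block_full q : q < n %/ k.+1 -> #|block q| = k.+1.
Proof.
move=> qn; rewrite -(card_in_imset (@block_offset_inj q)) -[RHS]card_ord -cardsT.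
suff -> : [set block_offset u | u in block q] = [set: 'I_k.+1] by [].
apply/eqP; rewrite eqEsubset subsetT /=; apply/subsetP => a _.
have lt : q * k.+1 + a < n.
  apply: (@leq_trans (q.+1 * k.+1)); first by rewrite mulSn addnC ltn_add2r.
  by apply: leq_trans (leq_divM n k.+1); rewrite leq_mul2r qn orbT.
apply/imsetP; exists (Ordinal lt).
  by rewrite inE /= divnMDl // divn_small // addn0.
by apply: val_inj; rewrite /= modnMDl modn_small.
Qed.

Lemma star_free_block_edges : star_free k block_edges.
Proof.
apply/negP => /existsP[v /existsP[L /and3P[/eqP cL vL /forall_inP HL]]].
have : v |: L \subset block (v %/ k.+1).
  apply/subsetP => u /setU1P[-> | uL]; first by rewrite inE.
  by apply: block_edge_mem (HL u uL) _ _; rewrite !inE eqxx ?orbT.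
move/subset_leq_card; rewrite cardsU1 vL cL => H.
by have := leq_trans H (card_block _); rewrite ltnn.
Qed.

Lemma card_block_edges : #|block_edges| <= n * k.+1.
Proof.
have sub : block_edges \subset
           \bigcup_(u : 'I_n) [set [set u; v] | v in block (u %/ k.+1)].
  apply/subsetP => e eB; have := eB; rewrite !inE => /andP[/cards2P[u [v [_ euv]]] _].
  apply/bigcupP; exists u => //; apply/imsetP; exists v => //.
  by apply: block_edge_mem eB _ _; rewrite euv !inE eqxx ?orbT.
apply: leq_trans (subset_leq_card sub) (leq_trans (leq_card_bigcup _) _).
apply: leq_trans (_ : _ <= \sum_(u < n) k.+1) _.
  by apply: leq_sum => u _; apply: leq_trans (leq_imset_card _ _) (card_block _).
by rewrite big_const_ord iter_addn_0 mulnC.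
Qed.

Lemma ntri_block_edges : n %/ k.+1 * 'C(k.+1, 3) <= ntri block_edges.
Proof.
pose D (q : 'I_(n %/ k.+1)) := [set T : {set 'I_n} | T \subset block q & #|T| == 3].
have sub : \bigcup_q D q \subset triangles block_edges.
  apply/subsetP => T /bigcupP[q _]; rewrite !inE => /andP[Tq ->] /=.
  apply/forallP => e; apply/implyP => /andP[eT ce]; rewrite !inE ce /=.
  apply/forall_inP => u ue; apply/forall_inP => v ve.
  have eTq := subsetP (subset_trans eT Tq).
  by move: (eTq u ue) (eTq v ve); rewrite !inE => /eqP -> /eqP ->.
rewrite ntriE; apply: leq_trans (subset_leq_card sub).
rewrite -sum1_card (partition_disjoint_bigcup addn (fun _ => 1)).
  rewrite -[X in X * _]card_ord -sum_nat_const; apply: leq_sum => q _.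
  by rewrite sum1_card cards_draws card_block_full.
move=> i j ij; rewrite -setI_eq0; apply/eqP/setP => T; rewrite !inE.
apply/negP => /andP[/andP[Ti /eqP cT] /andP[Tj _]].
have [x xT] : exists x, x \in T by apply/card_gt0P; rewrite cT.
move: (subsetP Ti x xT) (subsetP Tj x xT); rewrite !inE => /eqP -> /eqP /val_inj ji.
by rewrite ji eqxx in ij.
Qed.

End Blocks.

Lemma bin3_mul6 k : 'C(k.+1, 3) * 6 = k.+1 * (k * k.-1).
Proof. by rewrite (bin_ffact k.+1 3) !ffactnS ffactn0 muln1. Qed.

Lemma g_K3_star_lower n k :
  n * (k * k.-1) <= 48 * g_K3_star n k + 12 * (n * k.+1) + k * (k * k.-1).
Proof.
have host := ntri_le_g_K3_star (block_edges_Kedges n k) (star_free_block_edges n k).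
have blocks := ntri_block_edges n k.
have edges := card_block_edges n k.
have n_le : n <= n %/ k.+1 * k.+1 + k.
  by rewrite {1}(divn_eq n k.+1) leq_add2l -ltnS ltn_pmod.
apply: leq_trans (leq_mul n_le (leqnn (k * k.-1))) _.
rewrite mulnDl leq_add2r -mulnA -bin3_mul6 mulnA.
move: host blocks edges; set t := ntri _; set c := _ * 'C(_, _); clear; lia.
Qed.

Local Open Scope R_scope.

Lemma g_K3_star_lower_R n k : (0 < k)%N ->
  INR n * (INR k * (INR k - 1)) <=
    48 * INR (g_K3_star n k) + 12 * (INR n * (INR k + 1)) + INR k * (INR k * (INR k - 1)).
Proof.
case: k => [|k] // _; have := g_K3_star_lower n k.+1.
(* [Nat.mul] recurses on its first argument: [plus_INR] would unfold [48 * g]. *)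
rewrite [(48 * _)%N]mulnC [(12 * _)%N]mulnC => /leP/le_INR.
have c48 : INR 48 = 48 by rewrite INR_IZR_INZ.
have c12 : INR 12 = 12 by rewrite INR_IZR_INZ.
rewrite -!plusE -!multE !plus_INR !mult_INR c48 c12 succnK !S_INR; lra.
Qed.

Lemma sqrt_le_self x : 1 <= x -> sqrt x <= x.
Proof. by move=> x1; have := sqrt_pos x; have := sqrt_sqrt x ltac:(lra); nra. Qed.

Lemma leading_term_bound (eps N K G : R) : 0 < eps -> 1 <= N -> 1 <= K ->
  50 <= eps * K -> K <= eps / 2 * N ->
  N * (K * (K - 1)) <= 48 * G + 12 * (N * (K + 1)) + K * (K * (K - 1)) ->
  (1 - eps) * N * K ^ 2 / 48 <= G.
Proof.
move=> eps_pos N1 K1 K_big K_small H.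
(* [50 <= eps K] absorbs the error 13 N K + 12 N, [K <= eps/2 N] absorbs K^3. *)
have := Rmult_le_pos (eps * K - 50) (N * K) ltac:(lra) ltac:(nra).
have := Rmult_le_pos (eps / 2 * N - K) (K * K) ltac:(lra) ltac:(nra).
have := Rmult_le_pos N (K - 1) ltac:(lra) ltac:(lra).
nra.
Qed.

Theorem theorem1p5 (k : nat -> nat)
  (k_inf : forall M : nat, exists N : nat, forall n : nat, (N <= n)%N -> (M <= k n)%N)
  (k_small : forall eps : R, (0 < eps)%R ->
     exists N : nat, forall n : nat, (N <= n)%N ->
       (INR (k n) <= eps * sqrt (INR n))%R) :
  forall eps : R, (0 < eps)%R ->
    exists N : nat, forall n : nat, (N <= n)%N ->
      ((1 - eps) * INR n * INR (k n) ^ 2 / 48 <= INR (g_K3_star n (k n)))%R.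
Proof.
move=> eps eps_pos.
have [M M_big] := INR_unbounded (50 / eps).
have [N1 k_big] := k_inf M.+1.
have [N2 k_sqrt] := k_small (eps / 2) ltac:(lra).
exists (maxn 1 (maxn N1 N2)) => n; rewrite !geq_max => /and3P[n_pos /k_big kM /k_sqrt kn].
have k_pos : (0 < k n)%N by apply: leq_trans kM.
have n1 : 1 <= INR n by apply: (le_INR 1); apply/leP.
apply: (leading_term_bound eps_pos n1 _ _ _ (g_K3_star_lower_R n k_pos)).
- by apply: (le_INR 1); apply/leP.
- have : INR M <= INR (k n) by apply/le_INR/leP/ltnW.
  have : eps * (50 / eps) = 50 by field; lra.
  nra.
- have := sqrt_le_self n1; nra.
Qed.
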